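(* Let $\vec q=\{q_j\}_{j\ge1}$ be a sequence of natural numbers and $q\in\mathbb{N}$, and let $S(\vec q)$ and $S(q)$ be the corresponding modified Sierpinski sets. Assume that for every $p\in\mathbb{N}$ there is $\bar j$ such that $q_j=q$ for all $\bar j\le j\le \bar j+p$. Let $v$ be a vertex of the initial equilateral triangle. Then the tangent cone of $S(\vec q)$ at $v$ contains the tangent sets of $S(q)$ at $v$.
   Context: Fix a closed equilateral triangle $\Delta_0\subset\mathbb{R}^2$. Given $\vec q=\{q_j\}$, construct compact sets $K_0=\Delta_0\supseteq K_1\supseteq\cdots$: at step $j$, each triangle of $K_{j-1}$ (all equilateral, upward pointing) has its sides divided into $q_j$ equal parts, producing $q_j^2$ equal equilateral subtriangles, and all downward-pointing subtriangles are removed, leaving $q_j(q_j+1)/2$ triangles; $K_j$ is the union of the remaining triangles. $S(\vec q)=\bigcap_j K_j$, with the Euclidean metric. $S(q)$ denotes $S(\vec q)$ for the constant sequence $q_j\equiv q$ (the $q$-Sierpinski triangle). For a metric space $(X,d)$ and $x\in X$, a tangent set of $X$ at $x$ is any limit point as $t\to\infty$ of $(X,x,td)$ (metric rescaled by $t$, base point $x$) in the pointed Gromov–Hausdorff topology; the tangent cone is the family of all tangent sets. *)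

From Stdlib Require Import Reals Lra.
Open Scope R_scope.

Definition R2 : Type := (R * R)%type.

Definition dist2 (z w : R2) : R :=
  sqrt ((fst z - fst w) ^ 2 + (snd z - snd w) ^ 2).

Definition padd (z w : R2) : R2 := (fst z + fst w, snd z + snd w).
Definition psub (z w : R2) : R2 := (fst z - fst w, snd z - snd w).
Definition pscal (k : R) (z : R2) : R2 := (k * fst z, k * snd z).

Definition equilateral (a b c : R2) : Prop :=
  0 < dist2 a b /\ dist2 a b = dist2 b c /\ dist2 b c = dist2 c a.

(* The closed triangle with corner p, homothetic with ratio h to the
   initial triangle Delta_0 = conv{a,b,c} (same orientation, i.e. "upward"):
   { p + h (s (b-a) + t (c-a)) | s,t >= 0, s + t <= 1 }. *)
Definition in_tri (a b c : R2) (p : R2) (h : R) (z : R2) : Prop :=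
  exists s t : R, 0 <= s /\ 0 <= t /\ s + t <= 1 /\
    z = padd p (pscal h (padd (pscal s (psub b a)) (pscal t (psub c a)))).

(* kept qs j p h : the upward triangle with corner p and ratio h is one of
   the triangles composing K_j.  At step j+1 each such triangle is cut into
   q_{j+1}^2 subtriangles of ratio h/q_{j+1}; the upward ones have corners
   p + (h/q_{j+1}) (i (b-a) + k (c-a)) with i + k <= q_{j+1} - 1 and are kept;
   the downward ones are removed. *)
Inductive kept (a b c : R2) (qs : nat -> nat) : nat -> R2 -> R -> Prop :=
| kept0 : kept a b c qs 0 a 1
| keptS : forall j p h (i k : nat),
    kept a b c qs j p h ->
    (i + k < qs (S j))%nat ->
    kept a b c qs (S j)
      (padd p (pscal (h / INR (qs (S j)))
                 (padd (pscal (INR i) (psub b a)) (pscal (INR k) (psub c a)))))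
      (h / INR (qs (S j))).

Definition Kset (a b c : R2) (qs : nat -> nat) (j : nat) (z : R2) : Prop :=
  exists p h, kept a b c qs j p h /\ in_tri a b c p h z.

(* S(q_vec) = intersection of all K_j (the sequence q_j is qs j, j >= 1;
   qs 0 is unused). *)
Definition Sierpinski (a b c : R2) (qs : nat -> nat) (z : R2) : Prop :=
  forall j, Kset a b c qs j z.

Definition is_metric {Y : Type} (d : Y -> Y -> R) : Prop :=
  (forall x y, 0 <= d x y) /\
  (forall x y, d x y = 0 <-> x = y) /\
  (forall x y, d x y = d y x) /\
  (forall x y z, d x z <= d x y + d y z).

(* Pointed Gromov-Hausdorff convergence (Burago-Burago-Ivanov, Def. 8.1.1)
   of the pointed spaces (X, x, t_n * dist2) to (Y, y, dY):
   for every r > 0 and eps > 0 there is n0 such that for all n >= n0 there is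
   a map f : B_r(x) -> Y (ball for the metric t_n dist2 in X) with f x = y,
   distortion < eps, and the eps-neighbourhood of f(B_r(x)) containing
   B_{r-eps}(y). *)
Definition pGH_converges (X : R2 -> Prop) (x : R2) (t : nat -> R)
  (Y : Type) (dY : Y -> Y -> R) (y : Y) : Prop :=
  forall r eps : R, 0 < r -> 0 < eps ->
  exists n0 : nat, forall n : nat, (n0 <= n)%nat ->
  exists f : R2 -> Y,
    f x = y /\
    (forall z w, X z -> X w -> t n * dist2 x z < r -> t n * dist2 x w < r ->
       Rabs (dY (f z) (f w) - t n * dist2 z w) < eps) /\
    (forall u, dY y u < r - eps ->
       exists z, X z /\ t n * dist2 x z < r /\ dY u (f z) < eps).

Definition tangent_set (X : R2 -> Prop) (x : R2)
  (Y : Type) (dY : Y -> Y -> R) (y : Y) : Prop :=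
  X x /\ is_metric dY /\
  exists t : nat -> R,
    (forall M : R, exists N : nat, forall n, (N <= n)%nat -> M < t n) /\
    pGH_converges X x t Y dY y.

From Stdlib Require Import Reals Lra Lia Psatz Rgeom ClassicalEpsilon.
Open Scope R_scope.

(* Let h_J = 1 / (q_1 ... q_J).  Near a vertex v, the only triangle of K_J meeting the
   ball of radius |ab| h_J / 2 around v is the corner triangle at v, the image of Delta_0
   under the homothety of centre v and ratio h_J.  If q_(J+1) = ... = q_(J+p) = q, this
   homothety maps the level-p triangles of S(q) onto the level-(J+p) triangles of S(qs)
   inside the corner, so near v the set S(qs) lies within Hausdorff distance
   |ab| h_J / q^p of the image of S(q).  Given scales t_n for S(q), pick p_n with
   t_n / q^(p_n) -> 0 and a run of p_n copies of q starting after level J_n: then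
   (S(qs), v, (t_n / h_(J_n)) d) is asymptotically isometric to (S(q), v, t_n d) and
   has the same pointed Gromov-Hausdorff limit. *)

Ltac point_eq := apply injective_projections; unfold padd, pscal, psub; simpl.

Lemma dist2_sym z w : dist2 z w = dist2 w z.
Proof. unfold dist2. f_equal. ring. Qed.

Lemma dist2_refl z : dist2 z z = 0.
Proof.
  unfold dist2. replace ((fst z - fst z) ^ 2 + (snd z - snd z) ^ 2) with 0 by ring.
  exact sqrt_0.
Qed.

Lemma dist2_triangle x y z : dist2 x z <= dist2 x y + dist2 y z.
Proof.
  assert (Hsq : forall u, u ^ 2 = Rsqr u) by (intro; unfold Rsqr; ring).
  unfold dist2. rewrite !Hsq.
  exact (triangle (fst x) (snd x) (fst z) (snd z) (fst y) (snd y)).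
Qed.

Lemma dist2_sq z w : dist2 z w ^ 2 = (fst z - fst w) ^ 2 + (snd z - snd w) ^ 2.
Proof. apply pow2_sqrt, Rplus_le_le_0_compat; apply pow2_ge_0. Qed.

Definition homothety (v : R2) (k : R) (z : R2) : R2 := padd v (pscal k (psub z v)).

Lemma homothety_center v k : homothety v k v = v.
Proof. unfold homothety. point_eq; ring. Qed.

Lemma homothety_1 v z : homothety v 1 z = z.
Proof. unfold homothety. point_eq; ring. Qed.

Lemma homothety_comp v k l z : homothety v k (homothety v l z) = homothety v (k * l) z.
Proof. unfold homothety. point_eq; ring. Qed.

Lemma homothety_padd v k p h d :
  homothety v k (padd p (pscal h d)) = padd (homothety v k p) (pscal (k * h) d).
Proof. unfold homothety. point_eq; ring. Qed.

Lemma dist2_homothety v k z w :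
  0 <= k -> dist2 (homothety v k z) (homothety v k w) = k * dist2 z w.
Proof.
  intros Hk. unfold dist2, homothety, padd, pscal, psub; simpl.
  match goal with |- sqrt ?e = _ =>
    replace e with (k ^ 2 * ((fst z - fst w) ^ 2 + (snd z - snd w) ^ 2)) by ring end.
  rewrite sqrt_mult_alt by nra. rewrite sqrt_pow2 by lra. reflexivity.
Qed.

Definition asymptotic_copy (X : R2 -> Prop) (x : R2) (t : nat -> R)
  (X' : R2 -> Prop) (x' : R2) (s : nat -> R) : Prop :=
  forall r eps : R, 0 < r -> 0 < eps ->
  exists n0 : nat, forall n : nat, (n0 <= n)%nat ->
  0 <= s n /\
  exists phi : R2 -> R2,
    phi x = x' /\
    (forall z w, s n * dist2 (phi z) (phi w) = t n * dist2 z w) /\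
    (forall z, X' z -> s n * dist2 x' z < r -> exists w, X w /\ s n * dist2 (phi w) z < eps) /\
    (forall w, X w -> exists z, X' z /\ s n * dist2 (phi w) z < eps).

(* Error budget: g distorts distances by less than eps/3 and psi moves points by less than
   eps/6, so the composite g o psi has distortion less than eps. *)
Section CopyTransfer.

Variables (X X' : R2 -> Prop) (x x' : R2) (T S r eps : R).
Variables (Y : Type) (dY : Y -> Y -> R) (y : Y) (phi psi : R2 -> R2) (g : R2 -> Y).

Hypothesis r_pos : 0 < r.
Hypothesis eps_pos : 0 < eps.
Hypothesis S_nonneg : 0 <= S.
Hypothesis phi_base : phi x = x'.
Hypothesis phi_scale : forall z w, S * dist2 (phi z) (phi w) = T * dist2 z w.
Hypothesis psi_approx : forall z, X' z -> S * dist2 x' z < r ->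
  X (psi z) /\ S * dist2 (phi (psi z)) z < eps / 6.
Hypothesis g_distortion : forall w w', X w -> X w' ->
  T * dist2 x w < r + eps -> T * dist2 x w' < r + eps ->
  Rabs (dY (g w) (g w') - T * dist2 w w') < eps / 3.

Lemma scaled_triangle z1 z2 z3 : S * dist2 z1 z3 <= S * dist2 z1 z2 + S * dist2 z2 z3.
Proof.
  rewrite <- Rmult_plus_distr_l.
  apply Rmult_le_compat_l; [exact S_nonneg | apply dist2_triangle].
Qed.

Lemma psi_near_base z : X' z -> S * dist2 x' z < r -> T * dist2 x (psi z) < r + eps / 6.
Proof.
  intros Hz Hr. destruct (psi_approx z Hz Hr) as [_ Hd].
  rewrite <- phi_scale, phi_base.
  pose proof (scaled_triangle x' z (phi (psi z))). rewrite (dist2_sym z) in *. lra.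
Qed.

Lemma copy_distortion z z' : X' z -> X' z' -> S * dist2 x' z < r -> S * dist2 x' z' < r ->
  Rabs (dY (g (psi z)) (g (psi z')) - S * dist2 z z') < eps.
Proof.
  intros Hz Hz' Hr Hr'.
  destruct (psi_approx z Hz Hr) as [Hw Hd]. destruct (psi_approx z' Hz' Hr') as [Hw' Hd'].
  pose proof (psi_near_base z Hz Hr). pose proof (psi_near_base z' Hz' Hr').
  assert (Hg := g_distortion _ _ Hw Hw' ltac:(lra) ltac:(lra)).
  rewrite <- phi_scale in Hg. apply Rabs_def2 in Hg.
  pose proof (scaled_triangle (phi (psi z)) z (phi (psi z'))).
  pose proof (scaled_triangle z z' (phi (psi z'))).
  pose proof (scaled_triangle z (phi (psi z)) z').
  pose proof (scaled_triangle (phi (psi z)) (phi (psi z')) z').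
  rewrite (dist2_sym z (phi (psi z))), (dist2_sym z' (phi (psi z'))) in *.
  apply Rabs_def1; lra.
Qed.

Hypothesis dY_metric : is_metric dY.
Hypothesis X_base : X x.
Hypothesis g_base : g x = y.
Hypothesis g_onto : forall u, dY y u < (r + eps) - eps / 3 ->
  exists w, X w /\ T * dist2 x w < r + eps /\ dY u (g w) < eps / 3.
Hypothesis phi_onto : forall w, X w -> exists z, X' z /\ S * dist2 (phi w) z < eps / 6.

Lemma copy_onto u : dY y u < r - eps ->
  exists z, X' z /\ S * dist2 x' z < r /\ dY u (g (psi z)) < eps.
Proof.
  intros Hu. destruct dY_metric as [_ [_ [HdY_sym HdY_tri]]].
  destruct (g_onto u ltac:(lra)) as [w [Hw [Hwr Hgw]]].
  assert (Hx0 : T * dist2 x x < r + eps) by (rewrite dist2_refl; lra).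
  assert (Hg0 := g_distortion _ _ X_base Hw Hx0 Hwr). rewrite g_base in Hg0.
  apply Rabs_def2 in Hg0.
  pose proof (HdY_tri y u (g w)). pose proof (HdY_sym u (g w)).
  destruct (phi_onto w Hw) as [z [Hz Hzw]].
  assert (Hzr : S * dist2 x' z < r).
  { pose proof (scaled_triangle x' (phi w) z). rewrite <- phi_base, phi_scale in *. lra. }
  exists z. split; [exact Hz|]. split; [exact Hzr|].
  destruct (psi_approx z Hz Hzr) as [Hw' Hd'].
  pose proof (psi_near_base z Hz Hzr).
  assert (Hg := g_distortion _ _ Hw Hw' ltac:(lra) ltac:(lra)).
  rewrite <- phi_scale in Hg. apply Rabs_def2 in Hg.
  pose proof (scaled_triangle (phi w) z (phi (psi z))). rewrite (dist2_sym z) in *.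
  pose proof (HdY_tri u (g w) (g (psi z))). lra.
Qed.

End CopyTransfer.

Lemma pGH_converges_of_asymptotic_copy (X X' : R2 -> Prop) (x x' : R2) (t s : nat -> R)
  (Y : Type) (dY : Y -> Y -> R) (y : Y) :
  is_metric dY -> X x -> asymptotic_copy X x t X' x' s ->
  pGH_converges X x t Y dY y -> pGH_converges X' x' s Y dY y.
Proof.
  intros Hmet Hx Hcopy Hconv r eps Hr Heps.
  destruct (Hconv (r + eps) (eps / 3)) as [n1 Hn1]; [lra | lra |].
  destruct (Hcopy r (eps / 6)) as [n2 Hn2]; [lra | lra |].
  exists (Nat.max n1 n2). intros n Hn.
  destruct (Hn1 n ltac:(lia)) as [g [Hg_base [Hg_dist Hg_onto]]].
  destruct (Hn2 n ltac:(lia)) as [Hs [phi [Hphi_base [Hphi_scale [Hphi_near Hphi_onto]]]]].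
  assert (Hpsi : forall z, exists w, (z = x' -> w = x) /\
    (X' z -> s n * dist2 x' z < r -> X w /\ s n * dist2 (phi w) z < eps / 6)).
  { intro z. destruct (classic (z = x')) as [-> | Hne].
    - exists x. split; [reflexivity|]. intros _ _. split; [exact Hx|].
      rewrite Hphi_base, dist2_refl. lra.
    - destruct (classic (X' z /\ s n * dist2 x' z < r)) as [[Hz Hzr] | Hfar].
      + destruct (Hphi_near z Hz Hzr) as [w Hw]. exists w. split; [contradiction | auto].
      + exists x. split; [contradiction|]. intros Hz Hzr. exfalso. auto. }
  destruct (choice _ Hpsi) as [psi Hpsi'].
  exists (fun z => g (psi z)). split; [|split].
  - rewrite (proj1 (Hpsi' x') eq_refl). exact Hg_base.
  - intros z z' Hz Hz' Hzr Hzr'.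
    apply (copy_distortion X X' x x' (t n) (s n) r eps Y dY phi psi g); auto; try lra.
    intro w. exact (proj2 (Hpsi' w)).
  - intros u Hu.
    apply (copy_onto X X' x x' (t n) (s n) r eps Y dY y phi psi g); auto; try lra.
    intro w. exact (proj2 (Hpsi' w)).
Qed.

Definition admissible (qs : nat -> nat) : Prop := forall j, (1 <= j)%nat -> (1 <= qs j)%nat.

Fixpoint qprod (qs : nat -> nat) (j : nat) : nat :=
  match j with 0 => 1%nat | S j' => (qprod qs j' * qs (S j'))%nat end.

Lemma admissible_const q : (1 <= q)%nat -> admissible (fun _ => q).
Proof. intros Hq j _. exact Hq. Qed.

Lemma qprod_pos qs j : admissible qs -> (1 <= qprod qs j)%nat.
Proof. intros Hqs. induction j as [|j IH]; simpl; [lia|]. specialize (Hqs (S j)). nia. Qed.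

Lemma qprod_const q p : qprod (fun _ => q) p = (q ^ p)%nat.
Proof. induction p as [|p IH]; simpl; [reflexivity|]. rewrite IH. lia. Qed.

Lemma coord_form_nonneg s t : 0 <= s ^ 2 + s * t + t ^ 2.
Proof. nra. Qed.

Lemma coord_form_le_1 s t : 0 <= s -> 0 <= t -> s + t <= 1 -> s ^ 2 + s * t + t ^ 2 <= 1.
Proof. intros. nra. Qed.

Lemma coord_form_bounds s t e : s ^ 2 + s * t + t ^ 2 < (e / 2) ^ 2 ->
  s ^ 2 < e ^ 2 /\ t ^ 2 < e ^ 2 /\ (s + t) ^ 2 < e ^ 2.
Proof. intros H. split; [|split]; nra. Qed.

Lemma Rabs_lt_of_sq x e : 0 < e -> x ^ 2 < e ^ 2 -> Rabs x < e.
Proof. intros He Hx. apply Rabs_def1; nra. Qed.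

Section SierpinskiTriangle.

Variables a b c : R2.

Local Notation vec s t := (padd (pscal s (psub b a)) (pscal t (psub c a))).
Local Notation side := (dist2 a b).

Hypothesis Habc : equilateral a b c.

Lemma dist2_vec v s t :
  dist2 (padd v (vec s t)) v = side * sqrt (s ^ 2 + s * t + t ^ 2).
Proof.
  destruct Habc as [Hab [Hbc Hca]].
  pose proof (dist2_sq a b) as E1. pose proof (dist2_sq b c) as E2. pose proof (dist2_sq c a) as E3.
  rewrite <- Hbc in E2. rewrite <- Hca, <- Hbc in E3.
  set (X1 := fst b - fst a). set (X2 := snd b - snd a).
  set (Y1 := fst c - fst a). set (Y2 := snd c - snd a).
  assert (HX : X1 ^ 2 + X2 ^ 2 = side ^ 2) by (unfold X1, X2; lra).
  assert (HY : Y1 ^ 2 + Y2 ^ 2 = side ^ 2) by (unfold Y1, Y2; lra).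
  assert (HXY : X1 * Y1 + X2 * Y2 = side ^ 2 / 2) by (unfold X1, X2, Y1, Y2; lra).
  unfold dist2 at 1. unfold padd, pscal, psub; simpl. fold X1 X2 Y1 Y2.
  match goal with |- sqrt ?e = _ => replace e with
    (s ^ 2 * (X1 ^ 2 + X2 ^ 2) + 2 * s * t * (X1 * Y1 + X2 * Y2) + t ^ 2 * (Y1 ^ 2 + Y2 ^ 2))
    by ring end.
  rewrite HX, HY, HXY.
  replace (s ^ 2 * side ^ 2 + 2 * s * t * (side ^ 2 / 2) + t ^ 2 * side ^ 2)
    with (side ^ 2 * (s ^ 2 + s * t + t ^ 2)) by field.
  rewrite sqrt_mult_alt by apply pow2_ge_0. rewrite sqrt_pow2 by lra. reflexivity.
Qed.

Lemma in_tri_dist p h z : 0 <= h -> in_tri a b c p h z -> dist2 z p <= h * side.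
Proof.
  intros Hh [s [t [Hs [Ht [Hst ->]]]]].
  replace (padd p (pscal h (vec s t))) with (padd p (vec (h * s) (h * t))) by (point_eq; ring).
  rewrite dist2_vec.
  replace ((h * s) ^ 2 + h * s * (h * t) + (h * t) ^ 2) with (h ^ 2 * (s ^ 2 + s * t + t ^ 2))
    by ring.
  rewrite sqrt_mult_alt by apply pow2_ge_0. rewrite sqrt_pow2 by exact Hh.
  assert (Hq : sqrt (s ^ 2 + s * t + t ^ 2) <= 1)
    by (rewrite <- sqrt_1; apply sqrt_le_1_alt, coord_form_le_1; assumption).
  pose proof (proj1 Habc). pose proof (sqrt_pos (s ^ 2 + s * t + t ^ 2)).
  rewrite Rmult_comm. apply Rmult_le_compat_r; [lra|].
  rewrite <- (Rmult_1_r h) at 2. apply Rmult_le_compat_l; assumption.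
Qed.

Lemma vec_coords_small v s t e :
  dist2 (padd v (vec s t)) v < side * e / 2 -> Rabs s < e /\ Rabs t < e /\ Rabs (s + t) < e.
Proof.
  intros Hd. rewrite dist2_vec in Hd.
  pose proof (proj1 Habc) as Hside.
  set (Q := s ^ 2 + s * t + t ^ 2) in Hd.
  assert (HQ : 0 <= Q) by apply coord_form_nonneg.
  assert (Hsq : sqrt Q < e / 2) by (apply (Rmult_lt_reg_l side); lra).
  assert (He : 0 < e) by (pose proof (sqrt_pos Q); lra).
  assert (HQe : Q < (e / 2) ^ 2).
  { rewrite <- (pow2_sqrt Q HQ). simpl. rewrite !Rmult_1_r.
    apply Rmult_le_0_lt_compat; try apply sqrt_pos; exact Hsq. }
  destruct (coord_form_bounds s t e HQe) as [Hs [Ht Hst]].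
  split; [|split]; apply Rabs_lt_of_sq; assumption.
Qed.

Lemma in_tri_child p h Q (i k : nat) z : (i + k < Q)%nat ->
  in_tri a b c (padd p (pscal (h / INR Q) (vec (INR i) (INR k)))) (h / INR Q) z ->
  in_tri a b c p h z.
Proof.
  intros Hik [s [t [Hs [Ht [Hst ->]]]]].
  assert (HQ : INR i + INR k + 1 <= INR Q) by (rewrite <- plus_INR, <- S_INR; apply le_INR; lia).
  pose proof (pos_INR i). pose proof (pos_INR k).
  exists ((INR i + s) / INR Q), ((INR k + t) / INR Q).
  assert (HQinv : 0 < / INR Q) by (apply Rinv_0_lt_compat; lra).
  repeat split.
  - apply Rmult_le_pos; lra.
  - apply Rmult_le_pos; lra.
  - replace ((INR i + s) / INR Q + (INR k + t) / INR Q) with ((INR i + INR k + s + t) * / INR Q)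
      by (field; lra).
    rewrite <- (Rinv_r (INR Q)) by lra. apply Rmult_le_compat_r; lra.
  - point_eq; field; lra.
Qed.

Inductive kept_from (qs : nat -> nat) (p0 : R2) (h0 : R) : nat -> R2 -> R -> Prop :=
| kept_from_root : kept_from qs p0 h0 0 p0 h0
| kept_from_child : forall m p h (i k : nat),
    kept_from qs p0 h0 m p h -> (i + k < qs (S m))%nat ->
    kept_from qs p0 h0 (S m)
      (padd p (pscal (h / INR (qs (S m))) (vec (INR i) (INR k)))) (h / INR (qs (S m))).

Lemma kept_iff_kept_from qs j p h : kept a b c qs j p h <-> kept_from qs a 1 j p h.
Proof. split; induction 1; constructor; assumption. Qed.

Lemma kept_from_split qs p0 h0 m1 m2 p h :
  kept_from qs p0 h0 (m1 + m2) p h ->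
  exists p1 h1, kept_from qs p0 h0 m1 p1 h1 /\ kept_from (fun i => qs (m1 + i)%nat) p1 h1 m2 p h.
Proof.
  revert p h. induction m2 as [|m2 IH]; intros p h H.
  - rewrite Nat.add_0_r in H. exists p, h. split; [exact H | constructor].
  - rewrite Nat.add_succ_r in H. inversion H as [|m p' h' i k Hpar Hik]; subst.
    destruct (IH _ _ Hpar) as [p1 [h1 [Hanc Hdesc]]].
    exists p1, h1. split; [exact Hanc|].
    rewrite <- Nat.add_succ_r in *. apply (kept_from_child (fun i => qs (m1 + i)%nat)); assumption.
Qed.

Lemma kept_from_trans qs p0 h0 m1 m2 p1 h1 p h :
  kept_from qs p0 h0 m1 p1 h1 -> kept_from (fun i => qs (m1 + i)%nat) p1 h1 m2 p h ->
  kept_from qs p0 h0 (m1 + m2) p h.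
Proof.
  intros Hanc Hdesc. induction Hdesc as [|m p h i k Hdesc IH Hik].
  - rewrite Nat.add_0_r. exact Hanc.
  - rewrite Nat.add_succ_r in *. apply kept_from_child; assumption.
Qed.

Lemma kept_from_in_tri qs p0 h0 m p h z :
  kept_from qs p0 h0 m p h -> in_tri a b c p h z -> in_tri a b c p0 h0 z.
Proof.
  intros H. revert z. induction H as [|m p h i k Hpar IH Hik]; intros z Hz; [exact Hz|].
  apply IH. exact (in_tri_child p h _ i k z Hik Hz).
Qed.

Lemma kept_from_ext qs qs' p0 h0 m p h :
  (forall i, (1 <= i <= m)%nat -> qs i = qs' i) ->
  kept_from qs p0 h0 m p h -> kept_from qs' p0 h0 m p h.
Proof.
  intros Hext H. induction H as [|m p h i k Hpar IH Hik]; [constructor|].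
  rewrite (Hext (S m)) in * by lia.
  apply kept_from_child; [apply IH; intros; apply Hext; lia | exact Hik].
Qed.

Lemma kept_from_homothety qs v lam p0 h0 m p h :
  kept_from qs p0 h0 m p h ->
  kept_from qs (homothety v lam p0) (lam * h0) m (homothety v lam p) (lam * h).
Proof.
  induction 1 as [|m p h i k Hpar IH Hik]; [constructor|].
  rewrite homothety_padd.
  replace (lam * (h / INR (qs (S m)))) with (lam * h / INR (qs (S m))) by (unfold Rdiv; ring).
  apply kept_from_child; assumption.
Qed.

Lemma in_tri_corner p h : in_tri a b c p h p.
Proof. exists 0, 0. repeat split; try lra. point_eq; ring. Qed.

Lemma kept_lattice qs j p h : admissible qs -> kept a b c qs j p h ->
  h = / INR (qprod qs j) /\
  exists m n : nat, (m + n < qprod qs j)%nat /\ p = padd a (pscal h (vec (INR m) (INR n))).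
Proof.
  intros Hqs. induction 1 as [|j p h i k Hpar [Hh [m [n [Hmn Hp]]]] Hik]; simpl.
  - split; [field|]. exists 0%nat, 0%nat. split; [lia|]. point_eq; ring.
  - pose proof (qprod_pos qs j Hqs) as HM.
    assert (HM' : 0 < INR (qprod qs j)) by (apply lt_0_INR; lia).
    assert (HQ : 0 < INR (qs (S j))) by (apply lt_0_INR; lia).
    rewrite mult_INR. split; [rewrite Hh; field; lra|].
    exists (m * qs (S j) + i)%nat, (n * qs (S j) + k)%nat. split; [nia|].
    rewrite Hp, !plus_INR, !mult_INR. point_eq; field; lra.
Qed.

Lemma kept_extend qs j p h d : admissible qs -> kept a b c qs j p h ->
  exists h', kept a b c qs (j + d) p h'.
Proof.
  intros Hqs Hk. induction d as [|d [h' IH]].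
  - exists h. rewrite Nat.add_0_r. exact Hk.
  - rewrite Nat.add_succ_r. exists (h' / INR (qs (S (j + d)))).
    assert (Hchild := keptS a b c qs _ _ h' 0 0 IH ltac:(specialize (Hqs (S (j + d))); lia)).
    replace (padd p _) with p in Hchild by (point_eq; simpl; ring). exact Hchild.
Qed.

Lemma kept_corner_in_Sierpinski qs j p h : admissible qs -> kept a b c qs j p h ->
  Sierpinski a b c qs p.
Proof.
  intros Hqs Hk J. destruct (Nat.le_gt_cases j J) as [HjJ | HJj].
  - destruct (kept_extend qs j p h (J - j) Hqs Hk) as [h' Hk'].
    replace (j + (J - j))%nat with J in Hk' by lia.
    exists p, h'. split; [exact Hk' | apply in_tri_corner].
  - apply kept_iff_kept_from in Hk. replace j with (J + (j - J))%nat in Hk by lia.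
    destruct (kept_from_split _ _ _ _ _ _ _ Hk) as [p1 [h1 [Hanc Hdesc]]].
    exists p1, h1. split; [apply kept_iff_kept_from; exact Hanc|].
    exact (kept_from_in_tri _ _ _ _ _ _ _ Hdesc (in_tri_corner p h)).
Qed.

Lemma kept_vertex_triangle qs v J : admissible qs -> v = a \/ v = b \/ v = c ->
  kept a b c qs J (homothety v (/ INR (qprod qs J)) a) (/ INR (qprod qs J)).
Proof.
  intros Hqs Hv. induction J as [|J IH]; simpl.
  - replace (homothety v (/ 1) a) with a by (unfold homothety; point_eq; field).
    rewrite Rinv_1. constructor.
  - pose proof (qprod_pos qs J Hqs) as HM. pose proof (Hqs (S J) ltac:(lia)) as HQ.
    assert (HM' : 0 < INR (qprod qs J)) by (apply lt_0_INR; lia).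
    assert (HQ' : 0 < INR (qs (S J))) by (apply lt_0_INR; lia).
    rewrite mult_INR.
    replace (/ (INR (qprod qs J) * INR (qs (S J)))) with (/ INR (qprod qs J) / INR (qs (S J)))
      by (field; lra).
    destruct Hv as [-> | [-> | ->]].
    + assert (Hchild := keptS a b c qs _ _ _ 0 0 IH ltac:(lia)).
      replace (padd _ _) with (homothety a (/ INR (qprod qs J) / INR (qs (S J))) a) in Hchild
        by (unfold homothety; point_eq; simpl; field; lra).
      exact Hchild.
    + assert (Hchild := keptS a b c qs _ _ _ (qs (S J) - 1) 0 IH ltac:(lia)).
      rewrite minus_INR in Hchild by lia.
      replace (padd _ _) with (homothety b (/ INR (qprod qs J) / INR (qs (S J))) a) in Hchild
        by (unfold homothety; point_eq; simpl; field; lra).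
      exact Hchild.
    + assert (Hchild := keptS a b c qs _ _ _ 0 (qs (S J) - 1) IH ltac:(lia)).
      rewrite minus_INR in Hchild by lia.
      replace (padd _ _) with (homothety c (/ INR (qprod qs J) / INR (qs (S J))) a) in Hchild
        by (unfold homothety; point_eq; simpl; field; lra).
      exact Hchild.
Qed.

Lemma in_tri_vertex v h : v = a \/ v = b \/ v = c -> in_tri a b c (homothety v h a) h v.
Proof.
  unfold homothety. intros [-> | [-> | ->]];
    [exists 0, 0 | exists 1, 0 | exists 0, 1]; repeat split; try lra; point_eq; ring.
Qed.

Lemma Sierpinski_vertex qs v : admissible qs -> v = a \/ v = b \/ v = c -> Sierpinski a b c qs v.
Proof.
  intros Hqs Hv J. exists (homothety v (/ INR (qprod qs J)) a), (/ INR (qprod qs J)).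
  split; [apply kept_vertex_triangle | apply in_tri_vertex]; assumption.
Qed.

Lemma lattice_index_near_0 (m : nat) u h :
  0 < h -> 0 <= u -> Rabs ((INR m + u) * h) < h -> m = 0%nat.
Proof.
  intros Hh Hu Hlt. apply Rabs_def2 in Hlt as [Hlt _].
  assert (Huh : 0 <= u * h) by (apply Rmult_le_pos; lra).
  assert (Hm : INR m < INR 1) by (apply (Rmult_lt_reg_r h); simpl; lra).
  apply INR_lt in Hm. lia.
Qed.

Lemma lattice_index_near_1 (m M : nat) u h : 0 < h -> h * INR M = 1 -> u <= 1 -> (m < M)%nat ->
  Rabs ((INR m + u) * h - 1) < h -> m = (M - 1)%nat.
Proof.
  intros Hh HhM Hu HmM Hlt. apply Rabs_def2 in Hlt as [_ Hlt].
  assert (Huh : u * h <= h) by (rewrite <- (Rmult_1_l h) at 2; apply Rmult_le_compat_r; lra).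
  assert (HM : INR M < INR (m + 2)).
  { rewrite plus_INR. simpl. apply (Rmult_lt_reg_r h); [exact Hh | lra]. }
  apply INR_lt in HM. lia.
Qed.

Lemma kept_near_vertex qs J p h z v : admissible qs -> v = a \/ v = b \/ v = c ->
  kept a b c qs J p h -> in_tri a b c p h z -> dist2 z v < side * h / 2 -> p = homothety v h a.
Proof.
  intros Hqs Hv Hk [u [w [Hu [Hw [Huw Hz]]]]] Hd.
  destruct (kept_lattice qs J p h Hqs Hk) as [Hh [m [n [Hmn Hp]]]].
  pose proof (qprod_pos qs J Hqs) as HM.
  assert (HM' : 0 < INR (qprod qs J)) by (apply lt_0_INR; lia).
  assert (Hh0 : 0 < h) by (rewrite Hh; apply Rinv_0_lt_compat; exact HM').
  assert (HhM : h * INR (qprod qs J) = 1) by (rewrite Hh; field; lra).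
  destruct Hv as [-> | [-> | ->]].
  - replace z with (padd a (vec ((INR m + u) * h) ((INR n + w) * h))) in Hd
      by (rewrite Hz, Hp; point_eq; ring).
    destruct (vec_coords_small _ _ _ _ Hd) as [_ [_ Hsum]].
    replace ((INR m + u) * h + (INR n + w) * h) with ((INR (m + n) + (u + w)) * h) in Hsum
      by (rewrite plus_INR; ring).
    assert (Hmn0 := lattice_index_near_0 (m + n) (u + w) h Hh0 ltac:(lra) Hsum).
    assert (m = 0%nat) as -> by lia. assert (n = 0%nat) as -> by lia.
    rewrite Hp. unfold homothety. point_eq; ring.
  - replace z with (padd b (vec ((INR m + u) * h - 1) ((INR n + w) * h))) in Hd
      by (rewrite Hz, Hp; point_eq; ring).
    destruct (vec_coords_small _ _ _ _ Hd) as [Hx [Hy _]].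
    assert (m = (qprod qs J - 1)%nat) as ->
      by (apply (lattice_index_near_1 _ _ u h); auto; first [lra | lia]).
    assert (n = 0%nat) as -> by (apply (lattice_index_near_0 _ w h); auto).
    rewrite Hp, minus_INR by lia. unfold homothety. point_eq; rewrite Hh; field; lra.
  - replace z with (padd c (vec ((INR m + u) * h) ((INR n + w) * h - 1))) in Hd
      by (rewrite Hz, Hp; point_eq; ring).
    destruct (vec_coords_small _ _ _ _ Hd) as [Hx [Hy _]].
    assert (n = (qprod qs J - 1)%nat) as ->
      by (apply (lattice_index_near_1 _ _ w h); auto; first [lra | lia]).
    assert (m = 0%nat) as -> by (apply (lattice_index_near_0 _ u h); auto).
    rewrite Hp, minus_INR by lia. unfold homothety. point_eq; rewrite Hh; field; lra.
Qed.

Lemma Sierpinski_near_vertex_close_to_copy qs q J p v z :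
  admissible qs -> (1 <= q)%nat -> v = a \/ v = b \/ v = c ->
  (forall i, (1 <= i <= p)%nat -> qs (J + i)%nat = q) ->
  Sierpinski a b c qs z -> dist2 z v < side * / INR (qprod qs J) / 2 ->
  exists w, Sierpinski a b c (fun _ => q) w /\
    dist2 (homothety v (/ INR (qprod qs J)) w) z <= side * / INR (qprod qs J) / INR (q ^ p).
Proof.
  intros Hqs Hq Hv Hrun Hz Hd.
  pose proof (qprod_pos qs J Hqs) as HM.
  assert (HM' : 0 < INR (qprod qs J)) by (apply lt_0_INR; lia).
  destruct (Hz (J + p)%nat) as [p' [h' [Hk Hin]]].
  apply kept_iff_kept_from, kept_from_split in Hk as [p1 [h1 [Hanc Hdesc]]].
  pose proof (kept_from_in_tri _ _ _ _ _ _ _ Hdesc Hin) as Hin1.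
  apply kept_iff_kept_from in Hanc.
  pose proof (proj1 (kept_lattice _ _ _ _ Hqs Hanc)) as Hh1. subst h1.
  rewrite (kept_near_vertex _ _ _ _ _ _ Hqs Hv Hanc Hin1 Hd) in Hdesc.
  apply (kept_from_ext _ (fun _ => q)) in Hdesc; [|intros i Hi; exact (Hrun i Hi)].
  apply (kept_from_homothety _ v (INR (qprod qs J))) in Hdesc.
  rewrite homothety_comp, Rinv_r, homothety_1 in Hdesc by lra.
  apply kept_iff_kept_from in Hdesc.
  pose proof (proj1 (kept_lattice _ _ _ _ (admissible_const q Hq) Hdesc)) as Hh'.
  rewrite qprod_const in Hh'.
  exists (homothety v (INR (qprod qs J)) p'). split.
  - exact (kept_corner_in_Sierpinski _ _ _ _ (admissible_const q Hq) Hdesc).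
  - rewrite homothety_comp, Rinv_l, homothety_1, dist2_sym by lra.
    assert (Hh'0 : 0 <= h').
    { apply (Rmult_le_reg_l (INR (qprod qs J))); [exact HM'|]. rewrite Hh', Rmult_0_r.
      left. apply Rinv_0_lt_compat, lt_0_INR. pose proof (Nat.pow_nonzero q p). lia. }
    eapply Rle_trans; [exact (in_tri_dist _ _ _ Hh'0 Hin)|].
    right. replace h' with (/ INR (qprod qs J) * / INR (q ^ p)).
    + unfold Rdiv. ring.
    + rewrite <- Hh'. field. lra.
Qed.

Lemma copy_close_to_Sierpinski qs q J p v w :
  admissible qs -> (1 <= q)%nat -> v = a \/ v = b \/ v = c ->
  (forall i, (1 <= i <= p)%nat -> qs (J + i)%nat = q) ->
  Sierpinski a b c (fun _ => q) w ->
  exists z, Sierpinski a b c qs z /\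
    dist2 (homothety v (/ INR (qprod qs J)) w) z <= side * / INR (qprod qs J) / INR (q ^ p).
Proof.
  intros Hqs Hq Hv Hrun Hw.
  pose proof (qprod_pos qs J Hqs) as HM.
  assert (HhJ : 0 < / INR (qprod qs J)) by (apply Rinv_0_lt_compat, lt_0_INR; lia).
  destruct (Hw p) as [w0 [h0 [Hk Hin]]].
  pose proof (proj1 (kept_lattice _ _ _ _ (admissible_const q Hq) Hk)) as Hh0.
  rewrite qprod_const in Hh0.
  apply kept_iff_kept_from, (kept_from_homothety _ v (/ INR (qprod qs J))) in Hk.
  apply (kept_from_ext _ (fun i => qs (J + i)%nat)) in Hk;
    [|intros i Hi; symmetry; exact (Hrun i Hi)].
  rewrite Rmult_1_r in Hk.
  pose proof (proj1 (kept_iff_kept_from _ _ _ _) (kept_vertex_triangle qs v J Hqs Hv)) as Hcorner.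
  pose proof (kept_from_trans _ _ _ _ _ _ _ _ _ Hcorner Hk) as Hdesc.
  apply kept_iff_kept_from in Hdesc.
  exists (homothety v (/ INR (qprod qs J)) w0). split.
  - exact (kept_corner_in_Sierpinski _ _ _ _ Hqs Hdesc).
  - rewrite dist2_homothety by lra.
    assert (Hh00 : 0 <= h0).
    { rewrite Hh0. left. apply Rinv_0_lt_compat, lt_0_INR. pose proof (Nat.pow_nonzero q p). lia. }
    pose proof (in_tri_dist _ _ _ Hh00 Hin) as Hdist.
    rewrite Hh0 in Hdist. unfold Rdiv.
    replace (side * / INR (qprod qs J) * / INR (q ^ p))
      with (/ INR (qprod qs J) * (/ INR (q ^ p) * side)) by ring.
    apply Rmult_le_compat_l; lra.
Qed.

Lemma Sierpinski_asymptotic_copy qs q v (t : nat -> R) (J p : nat -> nat) :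
  admissible qs -> (1 <= q)%nat -> v = a \/ v = b \/ v = c ->
  (forall n i, (1 <= i <= p n)%nat -> qs (J n + i)%nat = q) ->
  (forall M, exists N, forall n, (N <= n)%nat -> M < t n) ->
  (forall eps, 0 < eps -> exists N, forall n, (N <= n)%nat -> t n * side / INR (q ^ p n) < eps) ->
  asymptotic_copy (Sierpinski a b c (fun _ => q)) v t (Sierpinski a b c qs) v
    (fun n => t n * INR (qprod qs (J n))).
Proof.
  intros Hqs Hq Hv Hrun Ht Hp r eps Hr Heps.
  pose proof (proj1 Habc) as Hside.
  destruct (Ht (2 * r / side)) as [N1 HN1]. destruct (Hp eps Heps) as [N2 HN2].
  exists (Nat.max N1 N2). intros n Hn.
  specialize (HN1 n ltac:(lia)). specialize (HN2 n ltac:(lia)).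
  pose proof (qprod_pos qs (J n) Hqs) as HM.
  assert (HM' : 0 < INR (qprod qs (J n))) by (apply lt_0_INR; lia).
  assert (HQ : 0 < INR (q ^ p n)) by (apply lt_0_INR; pose proof (Nat.pow_nonzero q (p n)); lia).
  set (M := INR (qprod qs (J n))) in *.
  assert (Htside : 2 * r < t n * side).
  { apply (Rmult_lt_compat_r side) in HN1; [|exact Hside].
    replace (2 * r / side * side) with (2 * r) in HN1 by (field; lra). exact HN1. }
  assert (Ht0 : 0 < t n) by (apply (Rmult_lt_reg_r side); lra).
  assert (Herr : forall d, d <= side * / M / INR (q ^ p n) -> t n * M * d < eps).
  { intros d Hd. eapply Rle_lt_trans; [|exact HN2].
    replace (t n * side / INR (q ^ p n)) with (t n * M * (side * / M / INR (q ^ p n)))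
      by (field; lra).
    apply Rmult_le_compat_l; [left; apply Rmult_lt_0_compat|]; assumption. }
  assert (Hnear : forall z, t n * M * dist2 v z < r -> dist2 z v < side * / M / 2).
  { intros z Hz. rewrite dist2_sym.
    apply (Rmult_lt_reg_l (t n * M)); [apply Rmult_lt_0_compat; lra|].
    replace (t n * M * (side * / M / 2)) with (t n * side / 2) by (field; lra). lra. }
  split; [left; apply Rmult_lt_0_compat; lra|].
  exists (homothety v (/ M)). split; [apply homothety_center|]. split; [|split].
  - intros z w. rewrite dist2_homothety by (left; apply Rinv_0_lt_compat; lra). field. lra.
  - intros z Hz Hzr.
    destruct (Sierpinski_near_vertex_close_to_copy qs q (J n) (p n) v z Hqs Hq Hv (Hrun n) Hz
      (Hnear z Hzr)) as [w [Hw Hd]].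
    exists w. split; [exact Hw | exact (Herr _ Hd)].
  - intros w Hw.
    destruct (copy_close_to_Sierpinski qs q (J n) (p n) v w Hqs Hq Hv (Hrun n) Hw) as [z [Hz Hd]].
    exists z. split; [exact Hz | exact (Herr _ Hd)].
Qed.

End SierpinskiTriangle.

Lemma pow_unbounded q A : (2 <= q)%nat -> exists p, A < INR (q ^ p).
Proof.
  intros Hq. destruct (INR_unbounded A) as [p Hp]. exists p.
  pose proof (Nat.pow_gt_lin_r q p ltac:(lia)) as Hlin. apply lt_INR in Hlin. lra.
Qed.

Lemma pow_exponents_vanishing q (t : nat -> R) C : (2 <= q)%nat ->
  exists p : nat -> nat, forall eps, 0 < eps ->
    exists N, forall n, (N <= n)%nat -> t n * C / INR (q ^ p n) < eps.
Proof.
  intros Hq.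
  destruct (choice (fun n p => Rabs (t n * C) * INR (S n) < INR (q ^ p))) as [p Hp].
  { intro n. apply pow_unbounded, Hq. }
  exists p. intros eps Heps. destruct (INR_unbounded (/ eps)) as [N HN]. exists N. intros n Hn.
  specialize (Hp n). pose proof (Rle_abs (t n * C)). pose proof (Rabs_pos (t n * C)).
  assert (HSn : 0 < INR (S n)) by (apply lt_0_INR; lia).
  assert (HNn : INR N <= INR (S n)) by (apply le_INR; lia).
  assert (HP : 0 < INR (q ^ p n)) by nra.
  apply (Rmult_lt_reg_r (INR (q ^ p n))); [exact HP|].
  replace (t n * C / INR (q ^ p n) * INR (q ^ p n)) with (t n * C) by (field; lra).
  assert (Heps_Sn : 1 < eps * INR (S n)).
  { apply (Rmult_lt_reg_l (/ eps)); [apply Rinv_0_lt_compat; lra|].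
    rewrite <- Rmult_assoc, Rinv_l, Rmult_1_l, Rmult_1_r by lra. lra. }
  nra.
Qed.

Lemma diverges_mul_ge_1 (t m : nat -> R) :
  (forall M, exists N, forall n, (N <= n)%nat -> M < t n) -> (forall n, 1 <= m n) ->
  forall M, exists N, forall n, (N <= n)%nat -> M < t n * m n.
Proof.
  intros Ht Hm M. destruct (Ht (Rmax M 0)) as [N HN]. exists N. intros n Hn.
  specialize (HN n Hn). specialize (Hm n). pose proof (Rmax_l M 0). pose proof (Rmax_r M 0).
  assert (t n * 1 <= t n * m n) by (apply Rmult_le_compat_l; lra). lra.
Qed.

Theorem theorem2p7 (a b c : R2) (qs : nat -> nat) (q : nat) :
  equilateral a b c ->
  (forall j : nat, (1 <= j)%nat -> (1 <= qs j)%nat) ->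
  (2 <= q)%nat ->
  (forall p : nat, exists jbar : nat, (1 <= jbar)%nat /\
     forall j : nat, (jbar <= j <= jbar + p)%nat -> qs j = q) ->
  forall v : R2, v = a \/ v = b \/ v = c ->
  forall (Y : Type) (dY : Y -> Y -> R) (y : Y),
    tangent_set (Sierpinski a b c (fun _ => q)) v Y dY y ->
    tangent_set (Sierpinski a b c qs) v Y dY y.
Proof.
  intros Habc Hqs Hq Hper v Hv Y dY y [Hv0 [Hmet [t [Ht Hconv]]]].
  destruct (choice _ Hper) as [jbar Hjbar].
  destruct (pow_exponents_vanishing q t (dist2 a b) Hq) as [p Hp].
  split; [exact (Sierpinski_vertex a b c qs v Hqs Hv)|]. split; [exact Hmet|].
  exists (fun n => t n * INR (qprod qs (jbar (p n) - 1))). split.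
  - apply (diverges_mul_ge_1 t); [exact Ht|]. intro n.
    apply (le_INR 1), qprod_pos. exact Hqs.
  - apply (pGH_converges_of_asymptotic_copy (Sierpinski a b c (fun _ => q)) _ v v t);
      try assumption.
    apply (Sierpinski_asymptotic_copy a b c Habc qs q v t (fun n => jbar (p n) - 1)%nat p);
      try assumption.
    + lia.
    + intros n i Hi. destruct (Hjbar (p n)) as [Hj1 Hrun]. apply Hrun. lia.
Qed.
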